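(* Let $R=\mathbb{F}_q+v\mathbb{F}_q+v^2\mathbb{F}_q$ with $v^3=v$, and let $C$ be a linear code of length $n$ over $R$. If $C$ is self-orthogonal (with respect to the Euclidean inner product on $R^n$), then its Gray image $\Psi(C)\subseteq\mathbb{F}_q^{3n}$ is self-orthogonal (with respect to the standard inner product on $\mathbb{F}_q^{3n}$).
   Context: $q$ is a prime power and $R=\mathbb{F}_q[v]/\langle v^3-v\rangle$; every element of $R$ is uniquely $a_0+va_1+v^2a_2$ with $a_i\in\mathbb{F}_q$. A linear code of length $n$ over $R$ is an $R$-submodule of $R^n$. The Euclidean inner product on $R^n$ is $x\cdot y=\sum_{i=0}^{n-1}x_iy_i$; $C^\perp=\{x\in R^n: x\cdot y=0\ \forall y\in C\}$, and $C$ is self-orthogonal if $C\subseteq C^\perp$. Every $c\in R^n$ can be written uniquely as $c=a_0+va_1+v^2a_2$ with $a_0,a_1,a_2\in\mathbb{F}_q^n$, and the Gray map $\Psi:R^n\to\mathbb{F}_q^{3n}$ is $\Psi(c)=(a_0,\ a_0+a_2,\ a_1)$. *)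

From HB Require Import structures.
From mathcomp Require Import all_boot all_order all_algebra.
From mathcomp Require Import ring.
Set Implicit Arguments. Unset Strict Implicit. Unset Printing Implicit Defensive.
Import Order.TTheory GRing.Theory.
Local Open Scope ring_scope.

(* The ring R = F[v]/<v^3 - v>; an element a0 + v a1 + v^2 a2 is stored as
   the triple of its (unique) coordinates (a0, a1, a2). *)
Record Rv3 (F : Type) := MkRv3 { rc0 : F; rc1 : F; rc2 : F }.

Section Rv3Ring.
Variable F : fieldType.

Definition rv3_to (x : Rv3 F) : F * F * F := (rc0 x, rc1 x, rc2 x).
Definition rv3_of (p : F * F * F) : Rv3 F := MkRv3 p.1.1 p.1.2 p.2.
Lemma rv3_toK : cancel rv3_to rv3_of. Proof. by case. Qed.

HB.instance Definition _ := Equality.copy (Rv3 F) (can_type rv3_toK).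
HB.instance Definition _ := Choice.copy (Rv3 F) (can_type rv3_toK).

Definition rv3_zero := MkRv3 (0 : F) 0 0.
Definition rv3_one := MkRv3 (1 : F) 0 0.
Definition rv3_add (x y : Rv3 F) :=
  MkRv3 (rc0 x + rc0 y) (rc1 x + rc1 y) (rc2 x + rc2 y).
Definition rv3_opp (x : Rv3 F) := MkRv3 (- rc0 x) (- rc1 x) (- rc2 x).
(* (a0 + v a1 + v^2 a2)(b0 + v b1 + v^2 b2) using v^3 = v, v^4 = v^2 *)
Definition rv3_mul (x y : Rv3 F) :=
  MkRv3 (rc0 x * rc0 y)
        (rc0 x * rc1 y + rc1 x * rc0 y + rc1 x * rc2 y + rc2 x * rc1 y)
        (rc0 x * rc2 y + rc2 x * rc0 y + rc1 x * rc1 y + rc2 x * rc2 y).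

Lemma rv3_eq (x y : Rv3 F) :
  rc0 x = rc0 y -> rc1 x = rc1 y -> rc2 x = rc2 y -> x = y.
Proof. by case: x; case: y => /= ? ? ? ? ? ? -> -> ->. Qed.

Lemma rv3_addA : associative rv3_add.
Proof. by move=> x y z; apply: rv3_eq => /=; rewrite addrA. Qed.
Lemma rv3_addC : commutative rv3_add.
Proof. by move=> x y; apply: rv3_eq => /=; rewrite addrC. Qed.
Lemma rv3_add0 : left_id rv3_zero rv3_add.
Proof. by move=> x; apply: rv3_eq => /=; rewrite add0r. Qed.
Lemma rv3_addN : left_inverse rv3_zero rv3_opp rv3_add.
Proof. by move=> x; apply: rv3_eq => /=; rewrite addNr. Qed.

HB.instance Definition _ :=
  GRing.isZmodule.Build (Rv3 F) rv3_addA rv3_addC rv3_add0 rv3_addN.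

Lemma rv3_mulA : associative rv3_mul.
Proof. by move=> x y z; apply: rv3_eq => /=; ring. Qed.
Lemma rv3_mulC : commutative rv3_mul.
Proof. by move=> x y; apply: rv3_eq => /=; ring. Qed.
Lemma rv3_mul1 : left_id rv3_one rv3_mul.
Proof. by move=> x; apply: rv3_eq => /=; ring. Qed.
Lemma rv3_mulDl : left_distributive rv3_mul (@GRing.add (Rv3 F)).
Proof. by move=> x y z; apply: rv3_eq => /=; ring. Qed.
Lemma rv3_one_neq0 : rv3_one != (0 : Rv3 F).
Proof. by apply/eqP => -[] /eqP; rewrite oner_eq0. Qed.

HB.instance Definition _ := GRing.Zmodule_isComNzRing.Build (Rv3 F)
  rv3_mulA rv3_mulC rv3_mul1 rv3_mulDl rv3_one_neq0.

Definition rv3_v : Rv3 F := MkRv3 0 1 0.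
End Rv3Ring.

Definition dotR (F : fieldType) (n : nat) (x y : 'rV[Rv3 F]_n) : Rv3 F :=
  \sum_(i < n) x 0 i * y 0 i.
Definition dotF (F : fieldType) (m : nat) (x y : 'rV[F]_m) : F :=
  \sum_(i < m) x 0 i * y 0 i.

Definition linear_code (F : fieldType) (n : nat) (C : {pred 'rV[Rv3 F]_n}) :=
  submod_closed C.

Definition self_orthogonalR (F : fieldType) (n : nat) (C : {pred 'rV[Rv3 F]_n}) :=
  forall x, x \in C -> forall y, y \in C -> dotR x y = 0.
Definition self_orthogonalF (F : fieldType) (m : nat) (D : 'rV[F]_m -> Prop) :=
  forall x, D x -> forall y, D y -> dotF x y = 0.

Definition gray (F : fieldType) (n : nat) (c : 'rV[Rv3 F]_n) : 'rV[F]_(n + n + n) :=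
  let a0 := \row_i rc0 (c 0 i) in
  let a1 := \row_i rc1 (c 0 i) in
  let a2 := \row_i rc2 (c 0 i) in
  row_mx (row_mx a0 (a0 + a2)) a1.

Definition gray_image (F : fieldType) (n : nat) (C : {pred 'rV[Rv3 F]_n})
  (w : 'rV[F]_(n + n + n)) : Prop := exists2 c, c \in C & w = gray c.

(** The Gray image is self-orthogonal because the standard inner product of
    two Gray images is a linear function of the Euclidean inner product of
    the words: with [c = x . y], one has
    [Psi(x) . Psi(y) = 2 c_0 + c_2], since coordinatewise
    [a0 b0 + (a0 + a2)(b0 + b2) + a1 b1 = 2 (ab)_0 + (ab)_2]. *)
From mathcomp Require Import all_boot all_order all_algebra.
From mathcomp Require Import ring.
Import GRing.Theory.
Local Open Scope ring_scope.

Section GrayInnerProduct.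
Variable F : fieldType.

Lemma rc0_sum (n : nat) (f : 'I_n -> Rv3 F) :
  rc0 (\sum_i f i) = \sum_i rc0 (f i).
Proof. exact: (big_morph _ (id1 := 0) (op1 := +%R)). Qed.

Lemma rc2_sum (n : nat) (f : 'I_n -> Rv3 F) :
  rc2 (\sum_i f i) = \sum_i rc2 (f i).
Proof. exact: (big_morph _ (id1 := 0) (op1 := +%R)). Qed.

Lemma dotF_row_mx (m1 m2 : nat) (a b : 'rV[F]_m1) (c d : 'rV[F]_m2) :
  dotF (row_mx a c) (row_mx b d) = dotF a b + dotF c d.
Proof.
rewrite /dotF big_split_ord /=.
by congr (_ + _); apply: eq_bigr => i _; rewrite ?row_mxEl ?row_mxEr.
Qed.

Lemma gray_coord_dot (a b : Rv3 F) :
  rc0 a * rc0 b + (rc0 a + rc2 a) * (rc0 b + rc2 b) + rc1 a * rc1 b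
  = 2%:R * rc0 (a * b) + rc2 (a * b).
Proof. by rewrite /=; ring. Qed.

Lemma dotF_gray (n : nat) (x y : 'rV[Rv3 F]_n) :
  dotF (gray x) (gray y) = 2%:R * rc0 (dotR x y) + rc2 (dotR x y).
Proof.
rewrite /gray !dotF_row_mx /dotF -!big_split /= rc0_sum rc2_sum mulr_sumr.
rewrite -big_split /=; apply: eq_bigr => i _.
by rewrite !mxE gray_coord_dot.
Qed.

End GrayInnerProduct.

Theorem theorem3 (F : finFieldType) (n : nat) (C : {pred 'rV[Rv3 F]_n}) :
  linear_code C -> self_orthogonalR C -> self_orthogonalF (gray_image C).
Proof.
move=> _ selforthC _ [x xC ->] _ [y yC ->].
by rewrite dotF_gray selforthC //= mulr0 addr0.
Qed.
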